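(* Let $L$ be an ideal lattice. Then $(\operatorname{Spec}L,D)$ is a spectrum of $L$, where $D(a)=\{p\in\operatorname{Spec}L\mid a\not\leq p\}$. For every spectrum $(X,\delta)$ of $L$ there exists a unique continuous map $f\colon X\to\operatorname{Spec}L$ such that $\delta(a)=f^{-1}(D(a))$ for all $a\in L$; it is given by $f(x)=\bigvee\{c\in L\mid c\text{ compact},\ x\notin\delta(c)\}$.
   Context: An ideal lattice is a poset $(L,\leq)$ with an associative multiplication such that: (L1) $L$ is a complete lattice; (L2) every element is a supremum of compact elements ($a$ is compact if $a\leq\sup A$ implies $a\leq\sup A'$ for some finite $A'\subseteq A$); (L3) multiplication distributes over binary joins on both sides; (L4) $1=\sup L$ is compact and is a two-sided identity; (L5) products of compact elements are compact. Prime: $p\neq1$ with $ab\leq p\Rightarrow a\leq p$ or $b\leq p$. $\operatorname{Spec}L$: set of primes with the Zariski topology whose closed sets are $V(a)=\{p\mid a\leq p\}$. A spectrum of $L$ is a pair $(X,\delta)$ with $X$ a topological space and $\delta$ assigning to each $a\in L$ an open subset $\delta(a)\subseteq X$ such that $\delta(\bigvee_{a\in A}a)=\bigcup_{a\in A}\delta(a)$ for all $A\subseteq L$, $\delta(1)=X$, and $\delta(ab)=\delta(a)\cap\delta(b)$ for all $a,b\in L$. *)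

From HB Require Import structures.
From mathcomp Require Import all_boot all_order.
From mathcomp Require Import boolp classical_sets functions cardinality topology.
Set Implicit Arguments. Unset Strict Implicit. Unset Printing Implicit Defensive.
Local Open Scope classical_set_scope.

Definition compact_wrt (T : Type) (le : T -> T -> Prop) (sup : set T -> T)
    (c : T) : Prop :=
  forall A : set T, le c (sup A) ->
    exists2 A' : set T, finite_set A' /\ A' `<=` A & le c (sup A').

Record idealLattice := IdealLattice {
  car :> Type;
  le : car -> car -> Prop;
  mul : car -> car -> car;
  sup : set car -> car;
  le_refl : forall a, le a a;
  le_antisym : forall a b, le a b -> le b a -> a = b;
  le_trans : forall a b c, le a b -> le b c -> le a c;
  sup_ub : forall (A : set car) a, A a -> le a (sup A);
  sup_least : forall (A : set car) b, (forall a, A a -> le a b) -> le (sup A) b;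
  mul_assoc : forall a b c, mul a (mul b c) = mul (mul a b) c;
  algebraic : forall a, exists A : set car,
    (forall c, A c -> compact_wrt le sup c) /\ a = sup A;
  mul_joinr : forall a b c, mul a (sup [set b; c]) = sup [set mul a b; mul a c];
  mul_joinl : forall a b c, mul (sup [set b; c]) a = sup [set mul b a; mul c a];
  top_compact : compact_wrt le sup (sup setT);
  mul1l : forall a, mul (sup setT) a = a;
  mulr1 : forall a, mul a (sup setT) = a;
  mul_compact : forall c d, compact_wrt le sup c -> compact_wrt le sup d ->
    compact_wrt le sup (mul c d)
}.

Section IdealLatticeDefs.
Variable L : idealLattice.

Definition top : L := sup setT.
Definition join (a b : L) : L := sup [set a; b].

Definition compact_el (a : L) : Prop := compact_wrt (@le L) (@sup L) a.

Definition prime_el (p : L) : Prop :=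
  p <> top /\ forall a b : L, le (mul a b) p -> le a p \/ le b p.

Record Spec := MkSpec { spec_pt : L; spec_prime : prime_el spec_pt }.

HB.instance Definition _ := gen_eqMixin Spec.
HB.instance Definition _ := gen_choiceMixin Spec.


Definition V (a : L) : set Spec := [set p | le a (spec_pt p)].
Definition D (a : L) : set Spec := [set p | ~ le a (spec_pt p)].

Definition zariski_open : set_system Spec := [set U | exists a, U = ~` V a].

Lemma le_top (a : L) : le a top.
Proof. exact: sup_ub. Qed.

Lemma join_le (a b : L) : le a b -> sup [set a; b] = b.
Proof.
move=> ab; apply: le_antisym.
  by apply: sup_least => x [->|->] //; exact: le_refl.
by apply: sup_ub; right.
Qed.

Lemma mul_monor (c a b : L) : le a b -> le (mul c a) (mul c b).
Proof.
move=> ab; rewrite -(join_le ab) mul_joinr; apply: sup_ub; by left.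
Qed.

Lemma mul_monol (c a b : L) : le a b -> le (mul a c) (mul b c).
Proof.
move=> ab; rewrite -(join_le ab) mul_joinl; apply: sup_ub; by left.
Qed.

Lemma mul_lel (a b : L) : le (mul a b) a.
Proof. have := mul_monor a (le_top b); by rewrite mulr1. Qed.

Lemma mul_ler (a b : L) : le (mul a b) b.
Proof. have := mul_monol b (le_top a); by rewrite mul1l. Qed.

Lemma zariski_openT : zariski_open setT.
Proof.
exists top; apply/seteqP; split => p //= _ Hp.
case: (spec_prime p) => ptop _; apply: ptop; apply: le_antisym => //; exact: le_top.
Qed.

Lemma zariski_openI : setI_closed zariski_open.
Proof.
move=> U W [a ->] [b ->]; exists (mul a b); apply/seteqP; split => p /=.
  move=> [Ha Hb] Hab; case: (spec_prime p) => _ /(_ _ _ Hab) [] //.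
move=> Hab; split => H; apply: Hab.
  exact: le_trans (mul_lel a b) H.
exact: le_trans (mul_ler a b) H.
Qed.

Lemma zariski_open_bigU (I : Type) (f : I -> set Spec) :
  (forall i, zariski_open (f i)) -> zariski_open (\bigcup_i f i).
Proof.
move=> Hf; pose a i := sval (cid (Hf i)).
have Ha i : f i = ~` V (a i) by rewrite /a; case: cid.
exists (sup (range a)); apply/seteqP; split => p /=.
  move=> [i _]; rewrite Ha => /= Hi Hs; apply: Hi.
  apply: le_trans Hs; apply: sup_ub; by exists i.
move=> Hs; apply: contrapT => Hn; apply: Hs; apply: sup_least => x [i _ <-].
apply: contrapT => Hi; apply: Hn; exists i => //; by rewrite Ha.
Qed.

HB.instance Definition _ := isOpenTopological.Build Spec
  zariski_openT zariski_openI zariski_open_bigU.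

End IdealLatticeDefs.

Definition is_spectrum (L : idealLattice) (X : topologicalType)
    (delta : L -> set X) : Prop :=
  [/\ forall a : L, open (delta a),
      forall A : set L, delta (sup A) = \bigcup_(a in A) delta a,
      delta (top L) = setT
    & forall a b : L, delta (mul a b) = delta a `&` delta b].

(* For a spectrum (X, δ) the elements a with x ∉ δ(a) are closed under
   arbitrary joins, since δ preserves them; by algebraicity their join f(x) is
   already the join of the compact ones, and a ≤ f(x) iff x ∉ δ(a).  Then
   δ(ab) = δ(a) ∩ δ(b) makes f(x) prime, the equivalence is exactly
   δ(a) = f⁻¹(D(a)), and uniqueness holds because a point of Spec L is
   determined by the elements below it. *)
From Pilot Require Import Defs.
From HB Require Import structures.
From mathcomp Require Import all_boot all_order.
From mathcomp Require Import boolp classical_sets functions cardinality topology.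
Local Open Scope classical_set_scope.

Section SpecTopology.
Variable L : idealLattice.

Lemma le_ext (p q : L) : (forall b, le b p <-> le b q) -> p = q.
Proof.
move=> Hpq; apply: le_antisym; first by apply/Hpq; exact: le_refl.
by apply/Hpq; exact: le_refl.
Qed.

Lemma spec_pt_inj : injective (@spec_pt L).
Proof.
case=> p hp [q hq] /= Epq; subst q; congr MkSpec; exact: Prop_irrelevance.
Qed.

Lemma D_preimage_inj (T : Type) (f g : T -> Spec L) :
  (forall a, f @^-1` D a = g @^-1` D a) -> f = g.
Proof.
move=> Hfg; apply: funext => x; apply: spec_pt_inj; apply: le_ext => b.
have /(congr1 (fun U => U x)) /= := Hfg b; rewrite /D /= => E.
by split => Hb; apply: contrapT; [rewrite -E | rewrite E] => /(_ Hb).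
Qed.

Lemma D_open (a : L) : open (D a).
Proof. by exists a. Qed.

Lemma D_sup (A : set L) : D (sup A) = \bigcup_(a in A) D a.
Proof.
apply/seteqP; split => p /=; rewrite /D /=.
  move=> HA; apply: contrapT => Hn; apply: HA; apply: sup_least => a Aa.
  by apply: contrapT => Ha; apply: Hn; exists a.
case=> a Aa Ha HA; apply: Ha; apply: le_trans HA; exact: sup_ub.
Qed.

Lemma D_top : D (top L) = setT.
Proof.
apply/seteqP; split => p //= _ Hp.
case: (spec_prime p) => ptop _; apply: ptop; apply: le_antisym => //.
exact: le_top.
Qed.

Lemma D_mul (a b : L) : D (Defs.mul a b) = D a `&` D b.
Proof.
apply/seteqP; split => p /=; rewrite /D /=.
  by move=> Hab; split => H; apply: Hab; apply: le_trans H;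
    [exact: mul_lel | exact: mul_ler].
by move=> [Ha Hb] Hab; case: (spec_prime p) => _ /(_ _ _ Hab) [].
Qed.

Lemma D_spectrum : is_spectrum (X := Spec L) (@D L).
Proof. by split; [exact: D_open | exact: D_sup | exact: D_top | exact: D_mul]. Qed.

End SpecTopology.

Section SpectrumMap.
Variables (L : idealLattice) (X : topologicalType) (delta : L -> set X).
Hypothesis delta_open : forall a, open (delta a).
Hypothesis delta_sup : forall A : set L, delta (sup A) = \bigcup_(a in A) delta a.
Hypothesis delta_top : delta (top L) = setT.
Hypothesis delta_mul : forall a b, delta (Defs.mul a b) = delta a `&` delta b.

Lemma delta_mono {a b : L} : le a b -> delta a `<=` delta b.
Proof. by move=> ab; rewrite -(join_le ab) delta_sup => x dx; exists a => //; left. Qed.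

Definition spectrum_pt (x : X) : L := sup [set c : L | compact_el c /\ ~ delta c x].

Lemma le_spectrum_pt (x : X) (a : L) : le a (spectrum_pt x) <-> ~ delta a x.
Proof.
split.
  move=> /delta_mono H /H; rewrite /spectrum_pt delta_sup => -[c [_ Hc] /Hc []].
move=> Hx; have [A [HA Ha]] := algebraic a; rewrite Ha in Hx *.
apply: sup_least => c Ac; apply: sup_ub; split; first exact: HA.
by move/(delta_mono (sup_ub Ac)).
Qed.

Lemma spectrum_pt_prime (x : X) : prime_el (spectrum_pt x).
Proof.
split.
  move=> Htop; have /le_spectrum_pt : le (top L) (spectrum_pt x).
    by rewrite Htop; exact: le_refl.
  by rewrite delta_top; apply.
move=> a b; rewrite !le_spectrum_pt delta_mul => Hab.
by case: (pselect (delta a x)) => ha; [right => hb; apply: Hab | left].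
Qed.

Definition spectrum_map (x : X) : Spec L := MkSpec (spectrum_pt_prime x).

Lemma spectrum_map_preimage (a : L) : delta a = spectrum_map @^-1` D a.
Proof.
apply/seteqP; split => x; rewrite /D /= le_spectrum_pt; first by move=> dx; apply.
exact: contrapT.
Qed.

Lemma spectrum_map_continuous : continuous spectrum_map.
Proof.
apply/continuousP => _ [a ->].
by rewrite -[_ @^-1` _]/(spectrum_map @^-1` D a) -spectrum_map_preimage.
Qed.

End SpectrumMap.

Arguments spectrum_map {L X delta}.
Arguments spectrum_map_preimage {L X delta}.
Arguments spectrum_map_continuous {L X delta}.

Theorem mainTheorem7 (L : idealLattice) :
  is_spectrum (X := Spec L) (@D L)
  /\ forall (X : topologicalType) (delta : L -> set X),
       is_spectrum delta ->
       exists f : X -> Spec L,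
         [/\ continuous f,
             (forall a : L, delta a = f @^-1` D a),
             (forall g : X -> Spec L,
                 continuous g -> (forall a : L, delta a = g @^-1` D a) -> g = f)
           & (forall x : X,
                 spec_pt (f x) = sup [set c : L | compact_el c /\ ~ delta c x])].
Proof.
split; first exact: D_spectrum.
move=> X delta [delta_open delta_sup delta_top delta_mul].
have f_preimage := spectrum_map_preimage delta_sup delta_top delta_mul.
exists (spectrum_map delta_sup delta_top delta_mul); split => //.
- exact: spectrum_map_continuous.
- by move=> g _ Hg; apply: D_preimage_inj => a; rewrite -Hg f_preimage.
Qed.
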